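(* Let $N\ge2$ and let $a_1,\dots,a_m$ be transpositions in $S_N$ each of the form $(\alpha,N)$ with $1\le\alpha\le N-1$. Suppose that for some $k$ we have $a_k\ne a_i$ for all $i\ne k$. Let $\sigma_1=a_1\cdots a_{k-1}$ and $\sigma_2=a_{k+1}\cdots a_m$. Then $|\sigma_1a_k\sigma_2|=|\sigma_1\sigma_2|+1$.
   Context: For a permutation $\sigma$, its length $|\sigma|$ is the minimal number of transpositions whose product is $\sigma$ (equivalently, $N$ minus the number of cycles of $\sigma$, fixed points included). Empty products are the identity. *)

From mathcomp Require Import all_boot all_order all_fingroup.
Set Implicit Arguments. Unset Strict Implicit. Unset Printing Implicit Defensive.

(* Length of a permutation of 'I_N: N minus the number of cycles
   (fixed points included); porbits s is the set of cycles of s. *)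
Definition plen (N : nat) (s : {perm 'I_N}) : nat := N - #|porbits s|.

From mathcomp Require Import all_boot all_order all_fingroup.
Set Implicit Arguments. Unset Strict Implicit. Unset Printing Implicit Defensive.

(* Put x := alpha k.  Every a_i with i <> k is a transposition
   (alpha_i, N) with alpha_i <> x (otherwise a_i = a_k) and x <> N, so it
   fixes x; hence s1 and s2 fix x.  Conjugating a_k past s1 gives
     s1 * a_k * s2 = (a_k ^ s1^-1) * (s1 * s2) = (x, y) * (s1 * s2)
   with y := s1^-1 N <> x.  Since x is a fixed point of s1 * s2, the
   transposition (x, y) merges the one-point cycle {x} into the cycle of y,
   so the number of cycles drops by exactly one and the length grows by one. *)

Section CyclesAtFixedPoint.

Variable T : finType.
Implicit Types (s : {perm T}) (x y : T).

Lemma porbit_fixed s x y : s x = x -> (y \in porbit s x) = (y == x).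
Proof.
move=> sx; apply/porbitP/eqP => [[i ->] | ->]; last by exists 0; rewrite expg0 perm1.
by elim: i => [|i IH]; rewrite ?expg0 ?perm1 // expgSr permM IH sx.
Qed.

Lemma big_perm_fix (I : Type) (r : seq I) (P : pred I) (F : I -> {perm T}) x :
  (forall i, P i -> F i x = x) -> (\big[mulg/1%g]_(i <- r | P i) F i) x = x.
Proof.
move=> Fx; apply: (big_ind (fun p : {perm T} => p x = x)) => //.
- by rewrite perm1.
- by move=> p q px qx; rewrite permM px qx.
Qed.

(* Multiplying by (x, y) where x is a fixed point of s joins the singleton
   cycle {x} to the cycle of y: one cycle fewer. *)
Lemma card_porbits_tperm_fixed s x y :
  s x = x -> x != y -> #|porbits (tperm x y * s)%g|.+1 = #|porbits s|.
Proof.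
move=> sx neq_xy.
have x_notin : x \notin porbit s y.
  by rewrite porbit_sym porbit_fixed // eq_sym.
have := porbits_mul_tperm s x y; rewrite x_notin neq_xy /=.
by rewrite -addn1 => /(congr1 (subn^~ 1)); rewrite !addnK => <-; rewrite addnC.
Qed.

Lemma card_porbits_le s : #|porbits s| <= #|T|.
Proof. exact: leq_imset_card. Qed.

End CyclesAtFixedPoint.

Lemma plen_tperm_fixed (N : nat) (s : {perm 'I_N}) (x y : 'I_N) :
  s x = x -> x != y -> plen (tperm x y * s)%g = (plen s).+1.
Proof.
move=> sx neq_xy; rewrite /plen -(card_porbits_tperm_fixed sx neq_xy).
have := card_porbits_le s; rewrite card_ord -(card_porbits_tperm_fixed sx neq_xy).
by move=> le_N; rewrite subnS prednK // subn_gt0.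
Qed.

Lemma mulg_conj_front (gT : finGroupType) (u t v : gT) :
  (u * t * v = t ^ u^-1 * (u * v))%g.
Proof. by rewrite conjgE invgK !mulgA mulgKV. Qed.

Theorem lemma3 (N : nat) (hN : 2 <= N) (top : 'I_N) (htop : val top = N.-1)
  (m : nat) (alpha : 'I_m -> 'I_N) (halpha : forall i, val (alpha i) < N.-1)
  (k : 'I_m)
  (hk : forall i : 'I_m, i != k -> tperm (alpha i) top != tperm (alpha k) top) :
  let a := fun i : 'I_m => tperm (alpha i) top in
  let s1 := \big[mulg/1%g]_(i < m | val i < val k) a i in
  let s2 := \big[mulg/1%g]_(i < m | val k < val i) a i in
  plen (s1 * a k * s2)%g = (plen (s1 * s2)%g).+1.
Proof.
move=> a s1 s2; set x := alpha k.
have x_top : x != top by rewrite -val_eqE /= htop neq_ltn halpha.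
have a_fix i : i != k -> a i x = x.
  move=> ik; apply: tpermD; last by rewrite eq_sym.
  by apply: contra (hk i ik) => /eqP ->.
have s1x : s1 x = x by apply: big_perm_fix => i lt_ik;
  apply: a_fix; rewrite -val_eqE /= ltn_eqF.
have s2x : s2 x = x by apply: big_perm_fix => i lt_ki;
  apply: a_fix; rewrite -val_eqE /= gtn_eqF.
have s1Vx : (s1^-1)%g x = x by rewrite -{1}s1x permK.
have x_y : x != (s1^-1)%g top.
  by apply: contra x_top => /eqP x_eq; rewrite -s1x x_eq permKV.
rewrite mulg_conj_front tpermJ s1Vx.
by apply: plen_tperm_fixed => //; rewrite permM s1x s2x.
Qed.
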